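(* Let $A=\{a,b\}$ (discrete) and let $x,y\in\vec I\times\vec I$ be incomparable (neither $x\le y$ nor $y\le x$). Give $\vec I\times\vec I$ the structure $\iota(a)=x$, $\iota(b)=y$. Then for every dimap $\iota_{\vec I}\colon A\to\vec I$ there is no dihomotopy equivalence between $(\vec I\times\vec I,\iota)$ and $(\vec I,\iota_{\vec I})$ in $A$-Posp.
   Context: A pospace is a topological space $U$ with a partial order that is a closed subset of $U\times U$; a dimap is a continuous order-preserving map; products carry the componentwise order. $\vec I=[0,1]$ with its usual order. Fix a pospace $A$. The category $A$-Posp has objects dimaps $\iota_B\colon A\to B$ and morphisms dimaps $f\colon B\to C$ with $f\circ\iota_B=\iota_C$. For morphisms $f,g\colon B\to C$ in $A$-Posp, a dihomotopy from $f$ to $g$ is a dimap $\phi\colon B\times\vec I\to C$ with $\phi(\cdot,0)=f$, $\phi(\cdot,1)=g$ and $\phi(\iota_B(a),t)=\iota_C(a)$ for all $a\in A$, $t$. Write $f\simeq g$ if there is a finite zigzag of such dihomotopies. A morphism $f\colon B\to C$ in $A$-Posp is a dihomotopy equivalence if there is a morphism $g\colon C\to B$ in $A$-Posp with $g\circ f\simeq\mathrm{Id}_B$ and $f\circ g\simeq\mathrm{Id}_C$. *)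

From HB Require Import structures.
From Stdlib Require Import Relations.
From mathcomp Require Import all_boot all_order all_algebra.
From mathcomp Require Import all_classical all_reals all_analysis.
From mathcomp Require Import Rstruct Rstruct_topology.
From Stdlib Require Import Rdefinitions.

Set Implicit Arguments.
Unset Strict Implicit.
Unset Printing Implicit Defensive.

Import Order.TTheory GRing.Theory Num.Theory.
Local Open Scope classical_set_scope.
Local Open Scope ring_scope.

(* A pospace is presented concretely as a subset D of an ambient
   topological type T (with the subspace topology) together with a
   partial order le on it. *)

Definition dI : set R := [set t | (0 <= t) && (t <= 1)].
Definition leI (s t : R) : Prop := s <= t.

Definition dI2 : set (R * R) := [set p | dI p.1 /\ dI p.2].
Definition leI2 (p q : R * R) : Prop := p.1 <= q.1 /\ p.2 <= q.2.

Definition is_dimap {X Y : topologicalType}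
  (DX : set X) (leX : X -> X -> Prop) (DY : set Y) (leY : Y -> Y -> Prop)
  (f : X -> Y) : Prop :=
  (forall x, DX x -> DY (f x)) /\
  {within DX, continuous f} /\
  (forall x x', DX x -> DX x' -> leX x x' -> leY (f x) (f x')).

Definition cylD {X : topologicalType} (DX : set X) : set (X * R) :=
  [set z | DX z.1 /\ dI z.2].
Definition cylLe {X : Type} (leX : X -> X -> Prop) (z z' : X * R) : Prop :=
  leX z.1 z'.1 /\ leI z.2 z'.2.

(* Morphisms of A-Posp, for A = {a,b} represented as bool
   (a = true, b = false); iX, iY are the structure maps. *)
Definition Amor {X Y : topologicalType}
  (DX : set X) (leX : X -> X -> Prop) (iX : bool -> X)
  (DY : set Y) (leY : Y -> Y -> Prop) (iY : bool -> Y) (f : X -> Y) : Prop :=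
  is_dimap DX leX DY leY f /\ (forall a, f (iX a) = iY a).

Definition dihom {X Y : topologicalType}
  (DX : set X) (leX : X -> X -> Prop) (iX : bool -> X)
  (DY : set Y) (leY : Y -> Y -> Prop) (iY : bool -> Y) (f g : X -> Y) : Prop :=
  Amor DX leX iX DY leY iY f /\ Amor DX leX iX DY leY iY g /\
  exists phi : X * R -> Y,
    is_dimap (cylD DX) (cylLe leX) DY leY phi /\
    (forall x, DX x -> phi (x, 0) = f x) /\
    (forall x, DX x -> phi (x, 1) = g x) /\
    (forall a t, dI t -> phi (iX a, t) = iY a).

(* f ~ g : finite zigzag of dihomotopies. *)
Definition dihomotopic {X Y : topologicalType}
  (DX : set X) (leX : X -> X -> Prop) (iX : bool -> X)
  (DY : set Y) (leY : Y -> Y -> Prop) (iY : bool -> Y) : relation (X -> Y) :=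
  clos_refl_sym_trans _ (dihom DX leX iX DY leY iY).

Definition dihom_equiv {X Y : topologicalType}
  (DX : set X) (leX : X -> X -> Prop) (iX : bool -> X)
  (DY : set Y) (leY : Y -> Y -> Prop) (iY : bool -> Y) (f : X -> Y) : Prop :=
  Amor DX leX iX DY leY iY f /\
  exists g : Y -> X,
    Amor DY leY iY DX leX iX g /\
    dihomotopic DX leX iX DX leX iX (g \o f) id /\
    dihomotopic DY leY iY DY leY iY (f \o g) id.

From HB Require Import structures.
From Stdlib Require Import Relations.
From mathcomp Require Import all_boot all_order all_algebra.
From mathcomp Require Import all_classical all_reals all_analysis.
From mathcomp Require Import Rstruct Rstruct_topology.
From Stdlib Require Import Rdefinitions.

(* A dimap preserves comparability, and the two endpoints of A are
   comparable in the totally ordered interval but not in the square, so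
   there is no morphism from the interval to the square in A-Posp; a
   dihomotopy equivalence in either direction would need one. *)

Local Open Scope classical_set_scope.
Local Open Scope ring_scope.

Lemma leI_total (s t : R) : leI s t \/ leI t s.
Proof.
by case: (Order.TotalTheory.leP s t) => [|/Order.POrderTheory.ltW] ?;
  [left | right].
Qed.

Lemma Amor_total_comparable {X Y : topologicalType}
    {DX : set X} {leX : X -> X -> Prop} {iX : bool -> X}
    {DY : set Y} {leY : Y -> Y -> Prop} {iY : bool -> Y} {f : X -> Y} :
  (forall u v, leX u v \/ leX v u) -> DX (iX true) -> DX (iX false) ->
  Amor DX leX iX DY leY iY f ->
  leY (iY true) (iY false) \/ leY (iY false) (iY true).
Proof.
move=> total Da Db [[_ [_ fmono]] fi].
rewrite -(fi true) -(fi false).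
case: (total (iX true) (iX false)) => [le_ab | le_ba].
- by left; apply: fmono.
- by right; apply: fmono.
Qed.

Lemma no_Amor_interval_incomparable {x y : R * R} {iI : bool -> R} :
  ~ leI2 x y -> ~ leI2 y x -> (forall a, dI (iI a)) ->
  forall g : R -> R * R, ~ Amor dI leI iI dI2 leI2 (fun a => if a then x else y) g.
Proof.
move=> nxy nyx DiI g gA.
by case: (Amor_total_comparable leI_total (DiI true) (DiI false) gA).
Qed.

Theorem mainTheorem7 (x y : R * R) (iI : bool -> R) :
  dI2 x -> dI2 y -> ~ leI2 x y -> ~ leI2 y x ->
  (forall a, dI (iI a)) ->
  let i2 : bool -> R * R := fun a => if a then x else y in
  (forall f : R * R -> R, ~ dihom_equiv dI2 leI2 i2 dI leI iI f) /\
  (forall g : R -> R * R, ~ dihom_equiv dI leI iI dI2 leI2 i2 g).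
Proof.
move=> _ _ nxy nyx DiI /=.
have noA := no_Amor_interval_incomparable nxy nyx DiI.
split.
- by move=> f [_ [g [gA _]]]; exact: (noA g).
- by move=> g [gA _]; exact: (noA g).
Qed.
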